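(* Let $\mathbb A^{\min}:=\bigcup_K\mu_K(K)\subseteq\mathbb A$, the union over all minimal complete valuation fields $K$, with the subspace topology. Write $U_{\mathbb R}:=\bigcup_{\upsilon\in(0,1]}\mu_{\mathbb R_\upsilon}(\mathbb R)$ and, for a prime $q$, $U_q:=\bigcup_{\omega\in(0,\infty)}\mu_{\mathbb Q_q^\omega}(\mathbb Q_q)$. Then: (a) $\mu_{\mathbb Q_0}(\mathbb Q)$ is closed in $\mathbb A^{\min}$. (b) If $K,L$ are distinct minimal fields (from the list $\mathbb Q_0,\mathbb Z(p),\mathbb R_\upsilon,\mathbb Q_p^\omega$), then $\mu_K(K)\cap\mu_L(L)=\emptyset$. (c) The map $(0,1]\times\mathbb R\to U_{\mathbb R}$, $(\upsilon,t)\mapsto\mu_{\mathbb R_\upsilon}(t)$, is a homeomorphism ($\mathbb R$ with the Euclidean topology); $U_{\mathbb R}$ is open in $\mathbb A^{\min}$ and its closure in $\mathbb A^{\min}$ is $U_{\mathbb R}\cup\mu_{\mathbb Q_0}(\mathbb Q)$. (d) For each prime $q$, $U_q$ is open in $\mathbb A^{\min}$ and the map $(0,\infty)\times\mathbb Q_q\to U_q$, $(\omega,s)\mapsto\mu_{\mathbb Q_q^\omega}(s)$, is a homeomorphism ($\mathbb Q_q$ with its $q$-adic topology). (e) For each prime $q$, $\mu_{\mathbb Z(q)}(\mathbb F_q)$ is contained in the closure of $U_q$. (f) $\mu_{\mathbb Q_0}(\mathbb Q)$ is contained in the closure of $\bigcup_{p\text{ prime}}\mu_{\mathbb Q_p^1}(\mathbb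 Q_p)$. (g) The closure of $\bigcup_{p}U_p$ in $\mathbb A^{\min}$ equals $\mu_{\mathbb Q_0}(\mathbb Q)\cup\bigcup_p\mu_{\mathbb Z(p)}(\mathbb F_p)\cup\bigcup_p U_p$. (h) For each prime $q$, $\mu_{\mathbb Q_0}(\mathbb Q)$ is contained in the closure of $U_q$.
   Context: $\mathbb A$ is the set of non-zero multiplicative semi-norms on $\mathbb Z[t]$ with the topology of pointwise convergence. For a complete valuation field $K$ and $s\in K$, $\mu_K(s)\in\mathbb A$ is $p\mapsto|p(s)|_K$. Minimal complete valuation fields (no proper closed subfield): $\mathbb Q_0$ ($\mathbb Q$ with trivial absolute value), $\mathbb Z(p)$ ($\mathbb F_p$ with trivial absolute value), $\mathbb R_\upsilon$ ($\mathbb R$ with $|x|^\upsilon$, $|\cdot|$ Euclidean, $\upsilon\in(0,1]$), $\mathbb Q_p^\omega$ ($\mathbb Q_p$ with $|x|_p^\omega$, $\omega\in(0,\infty)$), $p$ prime; these are pairwise non-isometrically-isomorphic and exhaust all minimal fields up to isometric isomorphism. *)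

From HB Require Import structures.
From mathcomp Require Import all_boot all_order all_algebra.
From Stdlib Require Import Reals.

Set Implicit Arguments.
Unset Strict Implicit.
Unset Printing Implicit Defensive.

Import GRing.Theory.

Local Open Scope ring_scope.
Definition ev (F : nzRingType) (P : {poly int}) (s : F) : F :=
  (map_poly (fun z : int => z%:~R) P).[s].
(* ring-side helpers used below (R_scope will shadow the %R delimiter) *)
Definition rsub (K : fieldType) (x y : K) : K := x - y.
Definition radd (K : fieldType) (x y : K) : K := x + y.
Definition rmul (K : fieldType) (x y : K) : K := x * y.
Definition rnat (K : fieldType) (n : nat) : K := n%:R.
Definition rfrac (K : fieldType) (a : int) (b : nat) : K := a%:~R / b%:R.
Definition rzero (K : fieldType) : K := 0.
Local Close Scope ring_scope.

Local Open Scope R_scope.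

Definition intR (z : int) : R :=
  match z with Posz n => INR n | Negz n => - INR (S n) end.

Definition evR (P : {poly int}) (t : R) : R :=
  List.fold_right (fun c acc => acc * t + intR c) 0 (polyseq P).

Definition rpow (x a : R) : R :=
  if Req_EM_T x 0 then 0 else Rpower x a.

(** Semi-norms (functions Z[t] -> R); the space A carries the topology of
    pointwise convergence. *)
Definition Sn := {poly int} -> R.

(** Model of Q_p: a field with an absolute value which is non-archimedean,
    restricts to the p-adic absolute value on the integers, is complete, and
    in which Q is dense.  This characterises Q_p up to isometric isomorphism. *)
Definition is_Qp (p : nat) (K : fieldType) (abs : K -> R) : Prop :=
  (forall x : K, 0 <= abs x) /\
  (forall x : K, abs x = 0 <-> x = rzero K) /\
  (forall x y : K, abs (rmul x y) = abs x * abs y) /\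
  (forall x y : K, abs (radd x y) <= Rmax (abs x) (abs y)) /\
  abs (rnat K p) = / INR p /\
  (forall m : nat, ~~ (p %| m)%nat -> abs (rnat K m) = 1) /\
  (forall (x : K) (eps : R), 0 < eps ->
     exists (a : int) (b : nat), (0 < b)%nat /\
       abs (rsub x (rfrac K a b)) < eps) /\
  (forall u : nat -> K,
     (forall eps, 0 < eps -> exists N, forall n m, (N <= n)%coq_nat ->
        (N <= m)%coq_nat -> abs (rsub (u n) (u m)) < eps) ->
     exists l : K, forall eps, 0 < eps -> exists N, forall n, (N <= n)%coq_nat ->
        abs (rsub (u n) l) < eps).

Arguments is_Qp : clear implicits.

Definition mu_Q0 (s : rat) : Sn :=
  fun P => if ev P s == rzero _ then 0 else 1.
Definition mu_Fp (p : nat) (s : 'F_p) : Sn :=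
  fun P => if ev P s == rzero _ then 0 else 1.
Definition mu_R (v t : R) : Sn :=
  fun P => rpow (Rabs (evR P t)) v.
Definition mu_Qp (K : fieldType) (abs : K -> R) (w : R) (s : K) : Sn :=
  fun P => rpow (abs (ev P s)) w.

(** The list of minimal complete valuation fields:
    MQ0 = Q_0, MFp p = Z(p), MR v = R_v, MQp p w = Q_p^w. *)
Inductive MinField : Type :=
| MQ0 : MinField
| MFp : nat -> MinField
| MR : R -> MinField
| MQp : nat -> R -> MinField.

Definition valid (F : MinField) : Prop :=
  match F with
  | MQ0 => True
  | MFp p => prime p
  | MR v => 0 < v <= 1
  | MQp p w => prime p /\ 0 < w
  end.

Definition img (Qp : nat -> fieldType) (absp : forall p, Qp p -> R)
  (F : MinField) : Sn -> Prop :=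
  match F with
  | MQ0 => fun f => exists s : rat, f = mu_Q0 s
  | MFp p => fun f => exists s : 'F_p, f = @mu_Fp p s
  | MR v => fun f => exists t : R, f = mu_R v t
  | MQp p w => fun f => exists s : Qp p, f = mu_Qp (absp p) w s
  end.

Arguments img : clear implicits.

Definition Amin Qp absp (f : Sn) : Prop :=
  exists F, valid F /\ img Qp absp F f.

Arguments Amin : clear implicits.

Definition U_R (f : Sn) : Prop :=
  exists v t, 0 < v <= 1 /\ f = mu_R v t.

Definition U_q (Qp : nat -> fieldType) (absp : forall p, Qp p -> R) (q : nat) (f : Sn) : Prop :=
  exists w (s : Qp q), 0 < w /\ f = mu_Qp (absp q) w s.

Arguments U_q : clear implicits.

Definition nbhd (f0 : Sn) (Ps : list {poly int}) (eps : R) (g : Sn) : Prop :=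
  forall P, List.In P Ps -> Rabs (g P - f0 P) < eps.

Definition closure_in (X S : Sn -> Prop) (f : Sn) : Prop :=
  X f /\ forall Ps eps, 0 < eps -> exists g, S g /\ nbhd f Ps eps g.

Definition open_in (X S : Sn -> Prop) : Prop :=
  (forall f, S f -> X f) /\
  forall f, S f -> exists Ps eps, 0 < eps /\
    forall g, X g -> nbhd f Ps eps g -> S g.

Definition closed_in (X S : Sn -> Prop) : Prop :=
  (forall f, S f -> X f) /\ forall f, closure_in X S f -> S f.

Definition homeo_onto {A : Type} (D : A -> Prop) (d : A -> A -> R)
  (h : A -> Sn) (U : Sn -> Prop) : Prop :=
  (forall a, D a -> U (h a)) /\
  (forall f, U f -> exists a, D a /\ f = h a) /\
  (forall a b, D a -> D b -> h a = h b -> a = b) /\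
  (forall a, D a -> forall Ps eps, 0 < eps -> exists del, 0 < del /\
     forall b, D b -> d a b < del -> nbhd (h a) Ps eps (h b)) /\
  (forall a, D a -> forall eps, 0 < eps -> exists Ps del, 0 < del /\
     forall b, D b -> nbhd (h a) Ps del (h b) -> d a b < eps).

Definition dRR (a b : R * R) : R :=
  Rmax (Rabs (fst a - fst b)) (Rabs (snd a - snd b)).
Definition dRK (K : fieldType) (abs : K -> R) (a b : R * K) : R :=
  Rmax (Rabs (fst a - fst b)) (abs (rsub (snd a) (snd b))).

From HB Require Import structures.
From mathcomp Require Import all_boot all_order all_algebra.
From Stdlib Require Import Reals Lra Psatz List FunctionalExtensionality.
From mathcomp Require Import Rstruct.

(* Evaluating a semi-norm at the constant polynomials [n] separates the minimal
   fields: [mu_Q0 s] is 1 at every [n > 0], [mu_Fp s] vanishes at [p], [mu_R v t]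
   is [n ^ v > 1] at [n >= 2], and [mu_Qp w s] is [p ^ (- w)], in ]0, 1[, at [p]
   and 1 at every [n] prime to [p].  These values are continuous coordinates on
   the space of semi-norms, which gives (a), (b), the openness statements and
   every exclusion in (c) and (g).  The closure points come from limits: as
   [w -> 0] every nonzero value [|x| ^ w] tends to 1, giving [mu_Q0] from [R_w]
   and [Q_q ^ w]; as [w -> oo] at an integer point of [Q_q] the values tend to
   those of its reduction mod [q]; and a prime [p] beyond the finitely many
   integers in play makes [mu_(Q_p ^ 1)] agree exactly with [mu_Q0].  For the
   homeomorphisms, the exponent is read off the value at the constant 2 (resp.
   [q]) and the point from the values at [X] and [X - 1] (resp. at [b X - a] for
   a rational approximation [a / b]). *)

Set Implicit Arguments.
Unset Strict Implicit.
Unset Printing Implicit Defensive.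
Import GRing.Theory.
(* [%R] already delimits the scope of the real numbers. *)
Delimit Scope ring_scope with ring.
Local Open Scope R_scope.

Lemma rpow0 a : rpow 0 a = 0.
Proof. rewrite /rpow; case: (Req_dec_T 0 0) => E /=; [reflexivity | congruence]. Qed.

Lemma rpowE x a : x <> 0 -> rpow x a = exp (a * ln x).
Proof. move=> Hx; rewrite /rpow; case: (Req_dec_T x 0) => E /=; [congruence | reflexivity]. Qed.

Lemma rpow_ge0 x a : 0 <= rpow x a.
Proof. rewrite /rpow; case: (Req_dec_T x 0) => _ /=; [lra | left; apply: exp_pos]. Qed.

Lemma rpow_gt0 x a : x <> 0 -> 0 < rpow x a.
Proof. by move=> Hx; rewrite rpowE //; apply: exp_pos. Qed.

Lemma rpow1 a : rpow 1 a = 1.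
Proof. by rewrite rpowE ?ln_1 ?Rmult_0_r ?exp_0 //; lra. Qed.

Lemma ln_rpow x a : 0 < x -> ln (rpow x a) = a * ln x.
Proof. by move=> Hx; rewrite rpowE ?ln_exp //; lra. Qed.

Lemma rpowK x a : 0 <= x -> a <> 0 -> rpow (rpow x a) (/ a) = x.
Proof.
move=> Hx Ha; case: (Req_dec_T x 0) => [->|Hx0]; first by rewrite !rpow0.
rewrite (rpowE a Hx0) rpowE ?ln_exp; last exact/Rgt_not_eq/exp_pos.
by rewrite -Rmult_assoc Rinv_l // Rmult_1_l exp_ln; lra.
Qed.

Lemma rpow_lt1 x a : 0 < x < 1 -> 0 < a -> rpow x a < 1.
Proof.
move=> Hx Ha; rewrite rpowE -?exp_0; last lra.
have Hl : ln x < 0 by rewrite -ln_1; apply: ln_increasing; lra.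
apply: exp_increasing; nra.
Qed.

Lemma rpow_gt1 x a : 1 < x -> 0 < a -> 1 < rpow x a.
Proof.
move=> Hx Ha; rewrite rpowE -?exp_0; last lra.
have Hl : 0 < ln x by rewrite -ln_1; apply: ln_increasing; lra.
apply: exp_increasing; nra.
Qed.

Lemma rpow_le1 x a : 0 <= x <= 1 -> 0 < a -> rpow x a <= 1.
Proof.
move=> Hx Ha; case: (Req_dec x 0) => [->|H0]; first by rewrite rpow0; lra.
case: (Req_dec x 1) => [->|H1]; first by rewrite rpow1; lra.
by left; apply: rpow_lt1; lra.
Qed.

Lemma rpow_inj_exponent x a b : 0 < x -> x <> 1 -> rpow x a = rpow x b -> a = b.
Proof.
move=> Hx Hx1 E; have := f_equal ln E; rewrite !ln_rpow // => El.
apply: (Rmult_eq_reg_r (ln x)) => // Hl0.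
by apply: Hx1; rewrite -(exp_ln x Hx) Hl0 exp_0.
Qed.

Lemma Rinv_range x : 1 < x -> 0 < / x < 1.
Proof.
move=> Hx; split; first by apply: Rinv_0_lt_compat; lra.
by rewrite -Rinv_1; apply: Rinv_lt_contravar; lra.
Qed.

Lemma rpow_inv_range x w : 1 < x -> 0 < w -> 0 < rpow (/ x) w < 1.
Proof.
move=> /Rinv_range Hi Hw.
by split; [apply: rpow_gt0 | apply: rpow_lt1]; lra.
Qed.

Lemma continuity_pt_eps f x : continuity_pt f x -> forall eps, 0 < eps ->
  exists del, 0 < del /\ forall y, Rabs (y - x) < del -> Rabs (f y - f x) < eps.
Proof.
move=> Hc eps He; have [del [Hd H]] := Hc eps He; exists del; split => // y Hy.
case: (Req_EM_T y x) => [->|Hn]; first by rewrite Rminus_diag Rabs_R0.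
by apply: (H y); split => //; split => //; apply: not_eq_sym.
Qed.

Lemma ln_continuity_eps x eps : 0 < x -> 0 < eps ->
  exists del, 0 < del /\ forall y, Rabs (y - x) < del -> 0 < y /\ Rabs (ln y - ln x) < eps.
Proof.
move=> Hx He.
have Hc : continuity_pt ln x.
  by apply: derivable_continuous_pt; exists (/ x); apply: derivable_pt_lim_ln.
have [d [Hd H]] := continuity_pt_eps Hc He.
exists (Rmin d (x / 2)); split; first by apply: Rmin_pos; lra.
move=> y /Rmin_Rgt [Hy1 Hy2]; split; last exact: H.
by move/Rabs_def2: Hy2; lra.
Qed.

Lemma exp_continuity_eps x eps : 0 < eps ->
  exists del, 0 < del /\ forall y, Rabs (y - x) < del -> Rabs (exp y - exp x) < eps.
Proof.
move=> He; apply: continuity_pt_eps => //.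
by apply: derivable_continuous_pt; exists (exp x); apply: derivable_pt_lim_exp.
Qed.

Lemma rpow_continuity_pos x a eps : 0 < x -> 0 < a -> 0 < eps ->
  exists del, 0 < del /\ forall x' a', Rabs (x' - x) < del ->
    Rabs (a' - a) < del -> Rabs (rpow x' a' - rpow x a) < eps.
Proof.
move=> Hx Ha He.
have [d2 [Hd2 H2]] := exp_continuity_eps (a * ln x) He.
set L := Rabs (ln x); have HL : 0 <= L by apply: Rabs_pos.
set eta := Rmin 1 (d2 / (2 * (a + 1))).
have Heta : 0 < eta by apply: Rmin_pos; [lra | apply: Rdiv_lt_0_compat; lra].
have [d1 [Hd1 H1]] := ln_continuity_eps Hx Heta.
exists (Rmin d1 (d2 / (2 * (L + 1)))); split.
  by apply: Rmin_pos => //; apply: Rdiv_lt_0_compat; lra.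
move=> x' a' /Rmin_Rgt [Hxx Hxx'] /Rmin_Rgt [_ Haa].
have [Hx' Hln] := H1 x' Hxx.
rewrite (rpowE a') ?(rpowE a); try lra.
apply: H2.
have -> : a' * ln x' - a * ln x = (a' - a) * ln x' + a * (ln x' - ln x) by ring.
have Hlnx' : Rabs (ln x') <= L + 1.
  have -> : ln x' = (ln x' - ln x) + ln x by ring.
  have Heta1 : eta <= 1 by apply: Rmin_l.
  by have := Rabs_triang (ln x' - ln x) (ln x); rewrite /L; lra.
have Heta2 : eta <= d2 / (2 * (a + 1)) by apply: Rmin_r.
apply: (Rle_lt_trans _ _ _ (Rabs_triang _ _)); rewrite !Rabs_mult (Rabs_pos_eq a); last lra.
have T1 : Rabs (a' - a) * Rabs (ln x') <= d2 / 2.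
  have -> : d2 / 2 = d2 / (2 * (L + 1)) * (L + 1) by field; lra.
  by apply: Rmult_le_compat; try apply: Rabs_pos; lra.
have T2 : a * Rabs (ln x' - ln x) < d2 / 2.
  apply: (Rle_lt_trans _ (a * (d2 / (2 * (a + 1))))); first by apply: Rmult_le_compat_l; lra.
  have -> : a * (d2 / (2 * (a + 1))) = d2 / 2 - d2 / (2 * (a + 1)) by field; lra.
  have Hd2a : 0 < d2 / (2 * (a + 1)) by apply: Rdiv_lt_0_compat; lra.
  lra.
lra.
Qed.

Lemma rpow_continuity_0 a eps : 0 < a -> 0 < eps ->
  exists del, 0 < del /\ forall x' a', 0 <= x' < del ->
    Rabs (a' - a) < del -> rpow x' a' < eps.
Proof.
move=> Ha He; have Hd3 := exp_pos (2 * ln eps / a).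
exists (Rmin (a / 2) (Rmin 1 (exp (2 * ln eps / a)))); split; first by repeat apply: Rmin_pos; lra.
move=> x' a' [Hx' /Rmin_Rgt [_ /Rmin_Rgt [Hx1 Hx3]]] /Rmin_Rgt [/Rabs_def2 Haa _].
case: (Req_dec x' 0) => [->|Hn]; first by rewrite rpow0.
rewrite rpowE // -(exp_ln eps He); apply: exp_increasing.
have Hl1 : ln x' < 0 by rewrite -ln_1; apply: ln_increasing; lra.
have Hl3 : ln x' < 2 * ln eps / a by rewrite -(ln_exp (2 * ln eps / a)); apply: ln_increasing; lra.
have Hlt : a / 2 * ln x' < ln eps.
  have -> : ln eps = a / 2 * (2 * ln eps / a) by field; lra.
  by apply: Rmult_lt_compat_l; lra.
nra.
Qed.

Lemma rpow_continuity x a eps : 0 <= x -> 0 < a -> 0 < eps ->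
  exists del, 0 < del /\ forall x' a', 0 <= x' -> Rabs (x' - x) < del ->
    Rabs (a' - a) < del -> Rabs (rpow x' a' - rpow x a) < eps.
Proof.
move=> [Hx|<-] Ha He.
  by have [del [Hd H]] := rpow_continuity_pos Hx Ha He; exists del; split => // *; apply: H.
have [del [Hd H]] := rpow_continuity_0 Ha He; exists del; split => // x' a' Hx' Hxx Haa.
rewrite rpow0 Rminus_0_r Rabs_pos_eq; last exact: rpow_ge0.
by apply: H => //; move: Hxx; rewrite Rminus_0_r Rabs_pos_eq.
Qed.

Lemma rpow_cvg1_exponent0 x eps : 0 < x -> 0 < eps ->
  exists d, 0 < d /\ forall a, 0 < a < d -> Rabs (rpow x a - 1) < eps.
Proof.
move=> Hx He; have [d [Hd H]] := exp_continuity_eps 0 He.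
have HL := Rabs_pos (ln x).
exists (d / (Rabs (ln x) + 1)); split; first by apply: Rdiv_lt_0_compat; lra.
move=> a [Ha Had]; rewrite rpowE -?exp_0; last lra.
apply: H; rewrite Rminus_0_r Rabs_mult Rabs_pos_eq; last lra.
have Had' : a * (Rabs (ln x) + 1) < d.
  have := Rmult_lt_compat_r (Rabs (ln x) + 1) _ _ ltac:(lra) Had.
  by unfold Rdiv; rewrite Rmult_assoc Rinv_l ?Rmult_1_r; [lra | apply: Rgt_not_eq; lra].
nra.
Qed.

Lemma rpow_cvg0_exponent_oo x eps : 0 <= x < 1 -> 0 < eps ->
  exists A, forall a, A < a -> rpow x a < eps.
Proof.
move=> Hx He; case: (Req_dec x 0) => [->|Hn].
  by exists 0 => a _; rewrite rpow0.
have Hl : ln x < 0 by rewrite -ln_1; apply: ln_increasing; lra.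
exists (ln eps / ln x) => a Ha; rewrite rpowE // -(exp_ln eps He).
apply: exp_increasing.
have := Rmult_lt_compat_r (- ln x) _ _ ltac:(lra) Ha.
rewrite (_ : ln eps / ln x * - ln x = - ln eps); last by field; lra.
lra.
Qed.

Lemma Rinv_near w w' d : 0 < w -> 0 < d ->
  Rabs (w' - w) < Rmin (w / 2) (d * (w * w) / 2) -> Rabs (/ w' - / w) < d.
Proof.
move=> Hw Hd /Rmin_Rgt [/Rabs_def2 H1 H2].
have Hw' : w / 2 < w' by lra.
have -> : / w' - / w = (w - w') / (w * w') by field; lra.
unfold Rdiv; rewrite Rabs_mult Rabs_inv (Rabs_pos_eq (w * w')); last nra.
rewrite Rabs_minus_sym; apply: (Rmult_lt_reg_r (w * w')); first nra.
rewrite Rmult_assoc Rinv_l ?Rmult_1_r; last by apply: Rgt_not_eq; nra.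
have Hdw : 0 < d * w by apply: Rmult_lt_0_compat.
have Hle : d * (w * w) / 2 <= d * (w * w') by nra.
lra.
Qed.

Lemma rpow_exponent_near x a eta : 0 < x -> x <> 1 -> 0 < eta ->
  exists d, 0 < d /\ forall a', Rabs (rpow x a' - rpow x a) < d -> Rabs (a' - a) < eta.
Proof.
move=> Hx H1 He.
have HL : 0 < Rabs (ln x).
  by apply: Rabs_pos_lt => E; apply: H1; rewrite -(exp_ln x Hx) E exp_0.
have Hpos : 0 < rpow x a by apply: rpow_gt0; lra.
have [d [Hd Hc]] := ln_continuity_eps Hpos (Rmult_lt_0_compat _ _ He HL).
exists d; split => // a' /Hc [_]; rewrite !ln_rpow //.
have -> : a' * ln x - a * ln x = (a' - a) * ln x by ring.
by rewrite Rabs_mult; apply: Rmult_lt_reg_r.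
Qed.

(* A point [x] of the base is recovered continuously from [rpow x a] as long as
   the exponent stays near [a], through [x = rpow (rpow x a) (/ a)]. *)
Lemma rpow_base_near x a e : 0 <= x -> 0 < a -> 0 < e ->
  exists d, 0 < d /\ forall x' a', 0 <= x' -> Rabs (a' - a) < d ->
    Rabs (rpow x' a' - rpow x a) < d -> Rabs (x' - x) < e.
Proof.
move=> Hx Ha He.
have [d1 [Hd1 H1]] := rpow_continuity (rpow_ge0 x a) (Rinv_0_lt_compat _ Ha) He.
have Hdd : 0 < Rmin (a / 2) (d1 * (a * a) / 2).
  by apply: Rmin_pos; [lra | have := Rmult_lt_0_compat _ _ Hd1 (Rmult_lt_0_compat _ _ Ha Ha); lra].
exists (Rmin d1 (Rmin (a / 2) (d1 * (a * a) / 2))); split; first exact: Rmin_pos.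
move=> x' a' Hx' /Rmin_Rgt [_ Haa] /Rmin_Rgt [Hrr _].
have Ha' : a' <> 0 by apply: Rgt_not_eq; move/Rmin_Rgt: Haa => [/Rabs_def2 ? _]; lra.
rewrite -(rpowK Hx' Ha') -(rpowK Hx (Rgt_not_eq _ _ Ha)).
by apply: H1 => //; [apply: rpow_ge0 | apply: Rinv_near].
Qed.

Lemma exists_common_radius {T : Type} (Ps : list T) (Q : T -> R -> Prop) :
  (forall P d d', Q P d -> 0 < d' <= d -> Q P d') ->
  (forall P, In P Ps -> exists d, 0 < d /\ Q P d) ->
  exists d, 0 < d /\ forall P, In P Ps -> Q P d.
Proof.
move=> Hmono; elim: Ps => [|P0 Ps IH] H; first by exists 1; split => //; lra.
have [d0 [Hd0 HQ0]] := H P0 (in_eq _ _).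
have [d1 [Hd1 HQ1]] := IH (fun P HP => H P (in_cons _ _ _ HP)).
have Hm : 0 < Rmin d0 d1 by apply: Rmin_pos.
exists (Rmin d0 d1); split => // P [<-|HP].
- by apply: (Hmono _ d0) => //; split => //; apply: Rmin_l.
- by apply: (Hmono _ d1); [apply: HQ1 | split => //; apply: Rmin_r].
Qed.

Lemma exists_common_threshold {T : Type} (Ps : list T) (Q : T -> R -> Prop) :
  (forall P A A', Q P A -> A <= A' -> Q P A') ->
  (forall P, In P Ps -> exists A, Q P A) ->
  exists A, forall P, In P Ps -> Q P A.
Proof.
move=> Hmono; elim: Ps => [|P0 Ps IH] H; first by exists 0.
have [A0 HQ0] := H P0 (in_eq _ _).
have [A1 HQ1] := IH (fun P HP => H P (in_cons _ _ _ HP)).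
exists (Rmax A0 A1) => P [<-|HP].
- by apply: (Hmono _ A0) => //; apply: Rmax_l.
- by apply: (Hmono _ A1); [apply: HQ1 | apply: Rmax_r].
Qed.

Lemma closure_in_ge X S f P c :
  closure_in X S f -> (forall g, S g -> c <= g P) -> c <= f P.
Proof.
move=> [_ H] Hg; case: (Rle_lt_dec c (f P)) => // Hlt.
have [g [Sg Hn]] := H [:: P] (c - f P) ltac:(lra).
by move/Rabs_def2: (Hn P (in_eq _ _)) (Hg g Sg); lra.
Qed.

Lemma closure_in_le X S f P c :
  closure_in X S f -> (forall g, S g -> g P <= c) -> f P <= c.
Proof.
move=> [_ H] Hg; case: (Rle_lt_dec (f P) c) => // Hlt.
have [g [Sg Hn]] := H [:: P] (f P - c) ltac:(lra).
by move/Rabs_def2: (Hn P (in_eq _ _)) (Hg g Sg); lra.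
Qed.

Lemma closure_in_subset X (S T : Sn -> Prop) f :
  (forall g, S g -> T g) -> closure_in X S f -> closure_in X T f.
Proof.
move=> HST [HX H]; split => // Ps eps He.
by have [g [Sg Hg]] := H Ps eps He; exists g; split => //; apply: HST.
Qed.

Lemma closure_in_refl X (S : Sn -> Prop) f : X f -> S f -> closure_in X S f.
Proof.
move=> HX HS; split => // Ps eps He; exists f; split => // P _.
by rewrite Rminus_diag Rabs_R0.
Qed.

Section Evaluation.
Local Open Scope ring_scope.

Lemma evE (F : nzRingType) P (s : F) : ev P s = (map_poly ( *~%R (1 : F)) P).[s].
Proof. by []. Qed.

Lemma evC (F : nzRingType) (c : int) (s : F) : ev c%:P s = c%:~R.
Proof. by rewrite /ev map_polyC hornerC. Qed.

Lemma evX (F : comNzRingType) (x : F) : ev 'X x = x.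
Proof. by rewrite /ev map_polyX hornerX. Qed.

Lemma ev_Xsub1 (F : comNzRingType) (x : F) : ev ('X - 1) x = x - 1.
Proof. by rewrite evE rmorphB /= map_polyX rmorph1 !hornerE. Qed.

Lemma ev_linear (F : comNzRingType) (a b : int) (x : F) :
  ev (b%:P * 'X - a%:P) x = b%:~R * x - a%:~R.
Proof. by rewrite evE rmorphB rmorphM /= !map_polyC map_polyX !hornerE. Qed.

Lemma ev_int (F : comNzRingType) (P : {poly int}) (z : int) :
  ev P (z%:~R : F) = (P.[z])%:~R.
Proof. by rewrite /ev horner_map. Qed.

Definition homog (P : {poly int}) (a d : int) : int :=
  \sum_(i < size P) P`_i * a ^+ i * d ^+ (size P - i).

Lemma ev_frac_homog (F : fieldType) (P : {poly int}) (a d : int) :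
  (d%:~R : F) != 0 -> (d%:~R : F) ^+ size P * ev P (a%:~R / d%:~R) = (homog P a d)%:~R.
Proof.
move=> Hd; rewrite evE (@horner_coef_wide _ (size P)); last exact: size_poly.
rewrite mulr_sumr /homog rmorph_sum /=; apply: eq_bigr => i _.
rewrite coef_map /= !rmorphM !rmorphXn /=.
have Hi : leq i (size P) by apply: ltnW.
rewrite -{1}(subnK Hi) exprD -mulrA (mulrCA (d%:~R ^+ i)) -exprMn.
by rewrite [d%:~R * _]mulrC divfK // mulrC.
Qed.

Lemma ev_ratr_eq0 (F : fieldType) (Hc : forall z : int, (z%:~R : F) = 0 -> z = 0)
  (P : {poly int}) (s : rat) :
  (ev P (ratr s : F) == 0) = (homog P (numq s) (denq s) == 0).
Proof.
have Hd : ((denq s)%:~R : F) != 0 by apply/eqP => /Hc /eqP; rewrite denq_eq0.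
have Hn : ((denq s)%:~R : F) ^+ size P != 0 by rewrite expf_neq0.
have E := @ev_frac_homog F P (numq s) _ Hd; rewrite /ratr.
apply/eqP/eqP => [He|Hh]; first by apply: Hc; rewrite -E He mulr0.
have : (denq s)%:~R ^+ size P * ev P (ratr s : F) == 0 by rewrite /ratr E Hh.
by rewrite mulf_eq0 (negbTE Hn) => /eqP.
Qed.

Lemma num_intr_eq0 (F : numFieldType) (z : int) : (z%:~R : F) = 0 -> z = 0.
Proof. by move/eqP; rewrite intr_eq0 => /eqP. Qed.

Lemma ev_rat_eq0 P (s : rat) : (ev P s == 0) = (homog P (numq s) (denq s) == 0).
Proof. by rewrite -[in LHS](divq_num_den s); apply: ev_ratr_eq0; apply: num_intr_eq0. Qed.

Lemma ev_Fp_eq0 (p : nat) (Hp : prime p) P (s : 'F_p) :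
  (ev P s == 0) = (p %| absz (P.[(val s)%:Z]))%nat.
Proof.
rewrite -[in LHS](natr_Zp s) (_ : (val s)%:R = ((val s)%:Z)%:~R) // ev_int.
by rewrite -(dvdz_pcharf (pchar_Fp Hp)).
Qed.

End Evaluation.

Lemma intRE z : intR z = (z%:~R : R)%ring.
Proof. by case: z => n; rewrite /intR ?NegzE ?mulrNz INRE. Qed.

Lemma evRE P t : evR P t = ev P t.
Proof.
rewrite /evR /ev map_polyE horner_Poly.
by elim: (polyseq P) => [|c s IH] //=; rewrite IH intRE.
Qed.

Definition absolute_value (K : fieldType) (abs : K -> R) : Prop :=
  (forall x, 0 <= abs x) /\ (forall x, abs x = 0 <-> x = 0%ring) /\
  (forall x y, abs (x * y)%ring = abs x * abs y) /\
  (forall x y, abs (x + y)%ring <= abs x + abs y).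

Section AbsoluteValue.
Variables (K : fieldType) (abs : K -> R).
Hypothesis Habs : absolute_value abs.

Lemma abs_ge0 x : 0 <= abs x. Proof. by case: Habs. Qed.
Lemma abs_eq0 x : abs x = 0 <-> x = 0%ring. Proof. by case: Habs => _ []. Qed.
Lemma absM x y : abs (x * y)%ring = abs x * abs y. Proof. by case: Habs => _ [_ []]. Qed.
Lemma absD x y : abs (x + y)%ring <= abs x + abs y. Proof. by case: Habs => _ [_ [_]]. Qed.
Lemma abs0 : abs 0%ring = 0. Proof. exact/abs_eq0. Qed.

Lemma abs_gt0 x : x <> 0%ring -> 0 < abs x.
Proof. by move=> Hx; case: (abs_ge0 x) => // /esym /abs_eq0. Qed.

Lemma abs1 : abs 1%ring = 1.
Proof.
have H1 : 0 < abs 1%ring by apply: abs_gt0; apply/eqP; exact: oner_neq0.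
have := absM 1 1; rewrite mulr1 => E.
by apply: (Rmult_eq_reg_l (abs 1%ring)); [lra | apply: Rgt_not_eq].
Qed.

Lemma absN x : abs (- x)%ring = abs x.
Proof.
have Hm : abs (-1)%ring = 1.
  have := absM (-1) (-1); rewrite mulrNN mulr1 abs1 => E.
  have := abs_ge0 (-1)%ring; nra.
by rewrite -mulN1r absM Hm Rmult_1_l.
Qed.

Lemma absB x y : abs (x - y)%ring = abs (y - x)%ring.
Proof. by rewrite -absN opprB. Qed.

Lemma abs_sub_ge x y : Rabs (abs x - abs y) <= abs (x - y)%ring.
Proof.
have := absD (x - y) y; have := absD (y - x) x.
rewrite !subrK (absB y x); move: (abs (x - y)%ring) => u Hy Hx.
by apply: Rabs_le; lra.
Qed.

Lemma absX x n : abs (x ^+ n)%ring = abs x ^ n.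
Proof. by elim: n => [|n IH]; rewrite ?expr0 ?abs1 // exprS absM IH. Qed.

Lemma horner_lipschitz (p : {poly K}) s : exists L, 0 <= L /\
  forall x, abs (x - s)%ring <= 1 -> abs (p.[x] - p.[s])%ring <= L * abs (x - s)%ring.
Proof.
elim/poly_ind: p => [|q c [L [HL IH]]].
  by exists 0; split => [|x _]; rewrite ?horner0 ?subrr ?abs0; lra.
have HS := abs_ge0 s; have HB := abs_ge0 q.[s]%ring.
exists (L * (abs s + 1) + abs q.[s]%ring); split; first by nra.
move=> x Hx; rewrite !hornerMXaddC.
have -> : ((q.[x] * x + c) - (q.[s] * s + c) = (q.[x] - q.[s]) * x + q.[s] * (x - s))%ring
  by rewrite mulrBl mulrBr addrA subrK opprD addrACA subrr addr0.
apply: (Rle_trans _ _ _ (absD _ _)); rewrite !absM.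
have Hax : abs x <= abs s + 1.
  by have := absD (x - s) s; rewrite subrK; lra.
have Hq := Rmult_le_compat _ _ _ _ (abs_ge0 _) (abs_ge0 x) (IH x Hx) Hax.
have := abs_ge0 (x - s)%ring; nra.
Qed.

Lemma abs_horner_continuity (p : {poly K}) s eps : 0 < eps ->
  exists del, 0 < del /\ forall x, abs (x - s)%ring < del ->
    Rabs (abs p.[x] - abs p.[s]) < eps.
Proof.
move=> He; have [L [HL H]] := horner_lipschitz p s.
have HeL : 0 < eps / (L + 1) by apply: Rdiv_lt_0_compat; lra.
exists (Rmin 1 (eps / (L + 1))); split; first by apply: Rmin_pos; lra.
move=> x /Rmin_Rgt [Hx1 Hx2].
apply: (Rle_lt_trans _ _ _ (abs_sub_ge _ _)).
apply: (Rle_lt_trans _ _ _ (H x ltac:(lra))).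
have Hxs := abs_ge0 (x - s)%ring.
have E : eps = eps / (L + 1) * (L + 1) by field; lra.
rewrite E; apply: (Rle_lt_trans _ ((L + 1) * abs (x - s)%ring)); nra.
Qed.

Lemma dRK_ge0 a b : 0 <= dRK abs a b.
Proof. exact: Rle_trans (Rabs_pos _) (Rmax_l _ _). Qed.

Lemma dRK_eq0 a b : dRK abs a b = 0 -> a = b.
Proof.
case: a b => [a1 a2] [b1 b2]; rewrite /dRK /rsub /= => E.
have := Rmax_l (Rabs (a1 - b1)) (abs (a2 - b2)%ring).
have := Rmax_r (Rabs (a1 - b1)) (abs (a2 - b2)%ring).
have := Rabs_pos (a1 - b1); have := abs_ge0 (a2 - b2)%ring; rewrite E => ? ? ? ?.
have /abs_eq0/eqP : abs (a2 - b2)%ring = 0 by lra.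
rewrite subr_eq0 => /eqP ->; congr pair.
apply: Rminus_diag_uniq; case: (Req_dec (a1 - b1) 0) => // /Rabs_no_R0; lra.
Qed.

Lemma dRK_lt a b d : dRK abs a b < d ->
  Rabs (fst b - fst a) < d /\ abs (snd b - snd a)%ring < d.
Proof.
rewrite /dRK /rsub Rabs_minus_sym (absB (snd b)) => H.
by split; apply: Rle_lt_trans H; [apply: Rmax_l | apply: Rmax_r].
Qed.

Lemma mu_abs_nbhd a : 0 < fst a -> forall Ps eps, 0 < eps ->
  exists del, 0 < del /\ forall b, 0 < fst b -> dRK abs a b < del ->
    nbhd (mu_Qp abs (fst a) (snd a)) Ps eps (mu_Qp abs (fst b) (snd b)).
Proof.
case: a => w s /= Hw Ps eps He.
suff [d [Hd HQ]] : exists d, 0 < d /\ forall P, In P Ps -> forall b, 0 < fst b ->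
    dRK abs (w, s) b < d -> Rabs (mu_Qp abs (fst b) (snd b) P - mu_Qp abs w s P) < eps.
  by exists d; split => // b Hb Hdb P HP; apply: HQ.
apply: exists_common_radius => [P d d' HP Hd' b Hb Hdb | P _]; first by apply: HP => //; lra.
have [d1 [Hd1 H1]] := rpow_continuity (abs_ge0 (ev P s)) Hw He.
have [d2 [Hd2 H2]] := abs_horner_continuity (map_poly (fun z : int => (z%:~R : K)%ring) P) s Hd1.
exists (Rmin d1 d2); split; first exact: Rmin_pos.
move=> b _ /dRK_lt [/Rmin_Rgt [k1 _] /Rmin_Rgt [_ k2]].
by apply: H1; [apply: abs_ge0 | apply: H2 | ].
Qed.

Hypothesis Hchar0 : forall z : int, (z%:~R : K)%ring = 0%ring -> z = 0%ring.

Lemma mu_Q0E s P : mu_Q0 s P = if (ev P (ratr s : K) == 0)%ring then 0 else 1.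
Proof. by rewrite /mu_Q0 /rzero ev_rat_eq0 ev_ratr_eq0. Qed.

Lemma mu_abs_small_exponent s Ps eps : 0 < eps ->
  exists d, 0 < d /\ forall w, 0 < w < d -> nbhd (mu_Q0 s) Ps eps (mu_Qp abs w (ratr s)).
Proof.
move=> He.
suff [d [Hd HQ]] : exists d, 0 < d /\ forall P, In P Ps -> forall w, 0 < w < d ->
    Rabs (mu_Qp abs w (ratr s) P - mu_Q0 s P) < eps.
  by exists d; split => // w Hw P HP; apply: HQ.
apply: exists_common_radius => [P d d' HP Hd' w Hw | P _]; first by apply: HP; lra.
rewrite mu_Q0E /mu_Qp; case: eqP => [->|Hnz].
  by exists 1; split => [|w _]; rewrite ?abs0 ?rpow0 ?Rminus_0_r ?Rabs_R0; lra.
exact: rpow_cvg1_exponent0 (abs_gt0 Hnz) He.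
Qed.

End AbsoluteValue.

Lemma homeo_onto_intro {A : Type} (D : A -> Prop) (d : A -> A -> R) (h : A -> Sn)
    (U : Sn -> Prop) :
  (forall a b, 0 <= d a b) -> (forall a b, d a b = 0 -> a = b) ->
  (forall f, U f <-> exists a, D a /\ f = h a) ->
  (forall a, D a -> forall Ps eps, 0 < eps -> exists del, 0 < del /\
     forall b, D b -> d a b < del -> nbhd (h a) Ps eps (h b)) ->
  (forall a, D a -> forall eps, 0 < eps -> exists Ps del, 0 < del /\
     forall b, D b -> nbhd (h a) Ps del (h b) -> d a b < eps) ->
  homeo_onto D d h U.
Proof.
move=> Hd0 Hd Himg Hfwd Hinv; split; [|split; [|split]] => //.
- by move=> a Ha; apply/Himg; exists a.
- by move=> f /Himg.
move=> a b Ha Hb E; apply: Hd; case: (Hd0 a b) => [Hlt|] //.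
have [Ps [del [Hdel Hn]]] := Hinv a Ha _ Hlt.
have Habsurd : d a b < d a b by apply: Hn => // P _; rewrite E Rminus_diag Rabs_R0.
lra.
Qed.

Lemma INR_prime_gt1 p : prime p -> 1 < INR p.
Proof. by move=> Hp; apply: lt_1_INR; apply/ltP; apply: prime_gt1. Qed.

Section PAdic.
Variables (p : nat) (K : fieldType) (abs : K -> R).
Hypotheses (HK : is_Qp p K abs) (Hp : prime p).

Lemma Qp_absolute_value : absolute_value abs.
Proof.
case: HK => [H0 [H1 [H2 [H3 _]]]]; split; [|split; [|split]] => // x y.
by apply: Rle_trans (H3 x y) _; apply: Rmax_lub; have := H0 x; have := H0 y; lra.
Qed.

Let HA := Qp_absolute_value.

Lemma Qp_ultra x y : abs (x + y)%ring <= Rmax (abs x) (abs y).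
Proof. by case: HK => _ [_ [_ [H _]]]; apply: H. Qed.

Lemma Qp_abs_p : abs (p%:R)%ring = / INR p.
Proof. by case: HK => _ [_ [_ [_ [H _]]]]. Qed.

Lemma Qp_abs_coprime m : ~~ (p %| m)%nat -> abs (m%:R)%ring = 1.
Proof. by case: HK => _ [_ [_ [_ [_ [H _]]]]]; apply: H. Qed.

Lemma Qp_dense x eps : 0 < eps -> exists (a : int) (b : nat), (0 < b)%nat /\
  abs (x - a%:~R / b%:R)%ring < eps.
Proof. by case: HK => _ [_ [_ [_ [_ [_ [H _]]]]]]; apply: H. Qed.

Lemma Qp_abs_nat_le1 n : abs (n%:R)%ring <= 1.
Proof.
elim: n => [|n IH]; first by rewrite (abs0 HA); lra.
rewrite -addn1 natrD; apply: Rle_trans (Qp_ultra _ _) _.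
by rewrite (abs1 HA); apply: Rmax_lub; lra.
Qed.

Lemma Qp_abs_nat_gt0 n : (0 < n)%nat -> 0 < abs (n%:R)%ring.
Proof.
move=> Hn; case: (pfactor_coprime Hp Hn) => m Hc ->.
rewrite natrM (absM HA) natrX (absX HA) Qp_abs_p Qp_abs_coprime -?prime_coprime //.
have := INR_prime_gt1 Hp => Hp1.
by apply: Rmult_lt_0_compat; [lra | apply: pow_lt; apply: Rinv_0_lt_compat; lra].
Qed.

Lemma Qp_abs_int z : abs (z%:~R)%ring = abs ((absz z)%:R)%ring.
Proof. by case: z => n //=; rewrite NegzE mulrNz (absN HA). Qed.

Lemma Qp_int_inj z : (z%:~R : K)%ring = 0%ring -> z = 0%ring.
Proof.
move=> E; have : abs (z%:~R)%ring = 0 by rewrite E (abs0 HA).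
rewrite Qp_abs_int; case: (posnP (absz z)) => [Hz _|Hz].
  by apply/eqP; rewrite -absz_eq0 Hz.
by have := Qp_abs_nat_gt0 Hz; lra.
Qed.

Lemma Qp_abs_int_dvd z : (p %| absz z)%nat -> abs (z%:~R)%ring <= / INR p.
Proof.
rewrite Qp_abs_int => /dvdnP [m ->]; rewrite natrM (absM HA) Qp_abs_p.
have := Qp_abs_nat_le1 m; have := abs_ge0 HA (m%:R)%ring.
have : 0 < / INR p by apply: Rinv_0_lt_compat; have := INR_prime_gt1 Hp; lra.
nra.
Qed.

Lemma Qp_abs_int_ndvd z : ~~ (p %| absz z)%nat -> abs (z%:~R)%ring = 1.
Proof. by rewrite Qp_abs_int; apply: Qp_abs_coprime. Qed.

End PAdic.

Lemma Rabs_absolute_value : absolute_value Rabs.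
Proof.
split; [exact: Rabs_pos | split; [|split; [exact: Rabs_mult | exact: Rabs_triang]]].
move=> x; split => [E|->]; last exact: Rabs_R0.
by case: (Req_dec x 0) => // /Rabs_no_R0.
Qed.

Lemma mu_R_abs v t : mu_R v t = mu_Qp Rabs v t.
Proof. by apply: functional_extensionality => P; rewrite /mu_R /mu_Qp evRE. Qed.

Definition nconst (n : nat) : {poly int} := ((Posz n)%:P)%ring.

Lemma mu_Q0_nconst s n : (0 < n)%nat -> mu_Q0 s (nconst n) = 1.
Proof. by rewrite /mu_Q0 /nconst evC /rzero intr_eq0; case: n. Qed.

Lemma mu_Fp_nconst p (Hp : prime p) (s : 'F_p) n :
  mu_Fp s (nconst n) = if (p %| n)%nat then 0 else 1.
Proof. by rewrite /mu_Fp /nconst evC /rzero -(dvdz_pcharf (pchar_Fp Hp)). Qed.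

Lemma mu_Qp_nconst (K : fieldType) (abs : K -> R) w s n :
  mu_Qp abs w s (nconst n) = rpow (abs (n%:R)%ring) w.
Proof. by rewrite /mu_Qp /nconst evC. Qed.

Lemma mu_R_nconst v t n : mu_R v t (nconst n) = rpow (INR n) v.
Proof. by rewrite mu_R_abs mu_Qp_nconst -INRE Rabs_pos_eq //; apply: pos_INR. Qed.

Lemma rpow_INR_gt1 v n : 0 < v -> (1 < n)%nat -> 1 < rpow (INR n) v.
Proof. by move=> Hv Hn; apply: rpow_gt1 => //; apply: lt_1_INR; apply/ltP. Qed.

Lemma prime_ndvd p p' : prime p -> prime p' -> p <> p' -> ~~ (p %| p')%nat.
Proof. by move=> Hp Hp' Hne; rewrite dvdn_prime2 //; apply/eqP. Qed.

(* Declared without implicit arguments, so that [absp] keeps its index explicit. *)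
Unset Implicit Arguments.

Section MinimalFields.
Variables (Qp : nat -> fieldType) (absp : forall p, Qp p -> R).
Hypothesis HQp : forall p, prime p -> is_Qp p (Qp p) (absp p).
Set Implicit Arguments.

Lemma img_Q0_nconst f : img Qp absp MQ0 f -> forall n, (0 < n)%nat -> f (nconst n) = 1.
Proof. by move=> [s ->] n; apply: mu_Q0_nconst. Qed.

Lemma img_Fp_nconst p f : prime p -> img Qp absp (MFp p) f ->
  forall n, f (nconst n) = if (p %| n)%nat then 0 else 1.
Proof. by move=> Hp [s ->] n; apply: mu_Fp_nconst. Qed.

Lemma img_R_nconst v f : img Qp absp (MR v) f -> forall n, f (nconst n) = rpow (INR n) v.
Proof. by move=> [t ->] n; apply: mu_R_nconst. Qed.

Lemma U_R_nconst g n : U_R g -> (1 < n)%nat -> 1 < g (nconst n).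
Proof. by move=> [v [t [Hv ->]]] Hn; rewrite mu_R_nconst; apply: rpow_INR_gt1 => //; lra. Qed.

Lemma U_q_img q w f : 0 < w -> img Qp absp (MQp q w) f -> U_q Qp absp q f.
Proof. by move=> Hw [s ->]; exists w, s. Qed.

Lemma mu_Qp_nconst_p q w s : prime q ->
  mu_Qp (absp q) w s (nconst q) = rpow (/ INR q) w.
Proof. by move=> Hq; rewrite mu_Qp_nconst (Qp_abs_p (HQp q Hq)). Qed.

Lemma U_q_nconst q g : prime q -> U_q Qp absp q g ->
  [/\ 0 < g (nconst q) < 1, forall n, g (nconst n) <= 1 &
      forall n, ~~ (q %| n)%nat -> g (nconst n) = 1].
Proof.
move=> Hq [w [s [Hw ->]]]; split.
- by rewrite mu_Qp_nconst_p //; apply: rpow_inv_range => //; apply: INR_prime_gt1.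
- move=> n; rewrite mu_Qp_nconst; apply: rpow_le1 => //.
  by split; [apply: abs_ge0 (Qp_absolute_value (HQp q Hq)) _ | exact: Qp_abs_nat_le1 (HQp q Hq) n].
- by move=> n Hn; rewrite mu_Qp_nconst (Qp_abs_coprime (HQp q Hq)) // rpow1.
Qed.

Lemma img_eq_Q0 G f : valid G -> img Qp absp G f ->
  (forall n, (0 < n)%nat -> f (nconst n) = 1) -> G = MQ0.
Proof.
case: G => [|p|v|p w] //= HG Hi H1; exfalso.
- by have := H1 p (prime_gt0 HG); rewrite (img_Fp_nconst HG Hi) dvdnn; lra.
- by have := H1 2%nat isT; rewrite (img_R_nconst Hi); have := @rpow_INR_gt1 _ 2 (proj1 HG) isT; lra.
- have [Hp Hw] := HG; have [[_ Hlt] _ _] := U_q_nconst Hp (U_q_img Hw Hi).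
  by have := H1 p (prime_gt0 Hp); lra.
Qed.

Lemma img_eq_Fp p G f : prime p -> valid G -> img Qp absp G f ->
  f (nconst p) = 0 -> G = MFp p.
Proof.
move=> Hp; case: G => [|p'|v|p' w] /= HG Hi H0.
- by exfalso; rewrite (img_Q0_nconst Hi (prime_gt0 Hp)) in H0; lra.
- rewrite (img_Fp_nconst HG Hi) in H0; case: (eqVneq p' p) => [-> //|Hne]; exfalso.
  by move: H0; rewrite (negbTE (prime_ndvd HG Hp (elimN eqP Hne))); lra.
- by exfalso; rewrite (img_R_nconst Hi) in H0; have := @rpow_INR_gt1 _ p (proj1 HG) (prime_gt1 Hp); lra.
- have [Hp' Hw] := HG; have [[Hgt _] _ Hc] := U_q_nconst Hp' (U_q_img Hw Hi).
  case: (eqVneq p' p) => [E|Hne]; exfalso; first by subst p'; lra.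
  by rewrite (Hc p (prime_ndvd Hp' Hp (elimN eqP Hne))) in H0; lra.
Qed.

Lemma img_eq_R v G f : 0 < v -> valid G -> img Qp absp G f ->
  f (nconst 2) = rpow (INR 2) v -> G = MR v.
Proof.
move=> Hv; have H2 := @rpow_INR_gt1 _ 2 Hv isT.
case: G => [|p|v'|p w] HG Hi E.
- by exfalso; rewrite (img_Q0_nconst Hi (isT : (0 < 2)%nat)) in E; lra.
- by exfalso; rewrite (img_Fp_nconst HG Hi) in E; move: E; case: (p %| 2)%nat; lra.
- rewrite (img_R_nconst Hi) in E; congr MR.
  by apply: rpow_inj_exponent E; have := INR_prime_gt1 (isT : prime 2); lra.
- have [Hp Hw] := HG; have [_ Hle _] := U_q_nconst Hp (U_q_img Hw Hi).
  by exfalso; have := Hle 2%nat; lra.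
Qed.

Lemma img_eq_Qp p w G f : prime p -> 0 < w -> valid G -> img Qp absp G f ->
  f (nconst p) = rpow (/ INR p) w -> G = MQp p w.
Proof.
move=> Hp Hw; have Hr := rpow_inv_range (INR_prime_gt1 Hp) Hw.
case: G => [|p'|v|p' w'] /= HG Hi E.
- by exfalso; rewrite (img_Q0_nconst Hi (prime_gt0 Hp)) in E; lra.
- by exfalso; rewrite (img_Fp_nconst HG Hi) in E; move: E; case: (p' %| p)%nat; lra.
- by exfalso; rewrite (img_R_nconst Hi) in E; have := @rpow_INR_gt1 _ p (proj1 HG) (prime_gt1 Hp); lra.
- have [Hp' Hw'] := HG; have [_ _ Hc] := U_q_nconst Hp' (U_q_img Hw' Hi).
  case: (eqVneq p' p) => [Ep|Hne]; last first.
    by exfalso; rewrite (Hc p (prime_ndvd Hp' Hp (elimN eqP Hne))) in E; lra.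
  subst p'; case: Hi E => s -> /= E; rewrite mu_Qp_nconst_p // in E; congr MQp.
  have Hp1 := INR_prime_gt1 Hp.
  apply: rpow_inj_exponent E; first by apply: Rinv_0_lt_compat; lra.
  move=> Hinv; have Hp1' : INR p = 1 by rewrite -(Rinv_inv (INR p)) Hinv Rinv_1.
  lra.
Qed.

Lemma img_inj F G f : valid F -> valid G -> img Qp absp F f -> img Qp absp G f -> F = G.
Proof.
case: F => [|p|v|p w] /= HF HG HiF HiG; apply: esym.
- exact: img_eq_Q0 HG HiG (img_Q0_nconst HiF).
- by apply: (img_eq_Fp HF HG HiG); rewrite (img_Fp_nconst HF HiF) dvdnn.
- exact: img_eq_R (proj1 HF) HG HiG (img_R_nconst HiF 2).
- case: HF => Hp Hw; apply: (img_eq_Qp Hp Hw HG HiG).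
  by case: HiF => s ->; apply: mu_Qp_nconst_p.
Qed.

Lemma Amin_img F f : valid F -> img Qp absp F f -> Amin Qp absp f.
Proof. by move=> HF Hi; exists F. Qed.

Lemma Amin_U_R f : U_R f -> Amin Qp absp f.
Proof. by move=> [v [t [Hv ->]]]; exists (MR v); split => //; exists t. Qed.

Lemma Amin_U_q q f : prime q -> U_q Qp absp q f -> Amin Qp absp f.
Proof. by move=> Hq [w [s [Hw ->]]]; exists (MQp q w); split => //; exists s. Qed.

Lemma Amin_nconst2_le1 f : Amin Qp absp f -> f (nconst 2) <= 1 \/ U_R f.
Proof.
move=> [[|p|v|p w] [HF Hi]].
- by left; rewrite (img_Q0_nconst Hi (isT : (0 < 2)%nat)); lra.
- by left; rewrite (img_Fp_nconst HF Hi); case: (p %| 2)%nat; lra.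
- by right; case: Hi => t ->; exists v, t.
- by left; case: HF => Hp Hw; have [_ Hle _] := U_q_nconst Hp (U_q_img Hw Hi).
Qed.

Lemma Amin_nconst_in01 q f : prime q -> Amin Qp absp f -> 0 < f (nconst q) < 1 ->
  U_q Qp absp q f.
Proof.
move=> Hq [[|p|v|p w] [HF Hi]] Hf.
- by rewrite (img_Q0_nconst Hi (prime_gt0 Hq)) in Hf; lra.
- by move: Hf; rewrite (img_Fp_nconst HF Hi); case: (p %| q)%nat; lra.
- by rewrite (img_R_nconst Hi) in Hf; have := @rpow_INR_gt1 _ q (proj1 HF) (prime_gt1 Hq); lra.
- case: HF => Hp Hw; case: (eqVneq p q) => [<-|Hne]; first exact: U_q_img Hi.
  have [_ _ Hc] := U_q_nconst Hp (U_q_img Hw Hi).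
  by rewrite (Hc q (prime_ndvd Hp Hq (elimN eqP Hne))) in Hf; lra.
Qed.

Lemma closed_img_Q0 : closed_in (Amin Qp absp) (img Qp absp MQ0).
Proof.
split=> [f|f Hcl]; first exact: Amin_img.
have Hge1 q : prime q -> 1 <= f (nconst q).
  move=> Hq; apply: (closure_in_ge Hcl) => g Hg.
  by rewrite (img_Q0_nconst Hg (prime_gt0 Hq)); lra.
have [[[|p|v|p w] [HF Hi]] _] := Hcl => //.
- by have := Hge1 p HF; rewrite (img_Fp_nconst HF Hi) dvdnn; lra.
- have Hle2 : f (nconst 2) <= 1.
    by apply: (closure_in_le Hcl) => g Hg; rewrite (img_Q0_nconst Hg (isT : (0 < 2)%nat)); lra.
  by rewrite (img_R_nconst Hi) in Hle2; have := @rpow_INR_gt1 _ 2 (proj1 HF) isT; lra.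
- case: HF => Hp Hw; have [[_ Hlt] _ _] := U_q_nconst Hp (U_q_img Hw Hi).
  by have := Hge1 p Hp; lra.
Qed.

Lemma open_U_R : open_in (Amin Qp absp) U_R.
Proof.
split=> [|f Hf]; first exact: Amin_U_R.
have H2 := U_R_nconst Hf (isT : (1 < 2)%nat).
exists [:: nconst 2], (f (nconst 2) - 1); split => [|g Hg Hn]; first lra.
have /Rabs_def2 := Hn (nconst 2) (in_eq _ _).
by case: (Amin_nconst2_le1 Hg) => //; lra.
Qed.

Lemma open_U_q q : prime q -> open_in (Amin Qp absp) (U_q Qp absp q).
Proof.
move=> Hq; split=> [f|f Hf]; first exact: Amin_U_q.
have [[h1 h2] _ _] := U_q_nconst Hq Hf.
exists [:: nconst q], (Rmin (f (nconst q)) (1 - f (nconst q))).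
split => [|g Hg Hn]; first by apply: Rmin_pos; lra.
apply: Amin_nconst_in01 => //.
have /Rabs_def2 := Hn (nconst q) (in_eq _ _).
have := Rmin_l (f (nconst q)) (1 - f (nconst q)).
by have := Rmin_r (f (nconst q)) (1 - f (nconst q)); lra.
Qed.

Lemma closure_U_R f : closure_in (Amin Qp absp) U_R f -> U_R f \/ img Qp absp MQ0 f.
Proof.
move=> Hcl.
have Hge1 q : prime q -> 1 <= f (nconst q).
  move=> Hq; apply: (closure_in_ge Hcl) => g Hg.
  exact/Rlt_le/(U_R_nconst Hg (prime_gt1 Hq)).
have [[[|p|v|p w] [HF Hi]] _] := Hcl.
- by right.
- by have := Hge1 p HF; rewrite (img_Fp_nconst HF Hi) dvdnn; lra.
- by left; case: Hi => t ->; exists v, t.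
- case: HF => Hp Hw; have [[_ Hlt] _ _] := U_q_nconst Hp (U_q_img Hw Hi).
  by have := Hge1 p Hp; lra.
Qed.

Lemma img_Q0_closure_U_R f : img Qp absp MQ0 f -> closure_in (Amin Qp absp) U_R f.
Proof.
move=> Hf; split; first exact: Amin_img Hf.
case: Hf => s -> Ps eps He.
have [d [Hd Hn]] := mu_abs_small_exponent Rabs_absolute_value (@num_intr_eq0 _) s Ps He.
exists (mu_R (Rmin (d / 2) 1) (ratr s)); split.
  by exists (Rmin (d / 2) 1), (ratr s); split => //; split; [apply: Rmin_pos; lra | apply: Rmin_r].
rewrite mu_R_abs; apply: Hn; split; first by apply: Rmin_pos; lra.
by apply: Rle_lt_trans (Rmin_l _ _) _; lra.
Qed.

Lemma img_Q0_closure_U_q q f : prime q -> img Qp absp MQ0 f ->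
  closure_in (Amin Qp absp) (U_q Qp absp q) f.
Proof.
move=> Hq Hf; split; first exact: Amin_img Hf.
case: Hf => s -> Ps eps He; have HK := HQp q Hq.
have [d [Hd Hn]] := mu_abs_small_exponent (Qp_absolute_value HK) (Qp_int_inj HK Hq) s Ps He.
exists (mu_Qp (absp q) (d / 2) (ratr s)); split; last by apply: Hn; lra.
by exists (d / 2), (ratr s); split => //; lra.
Qed.

Lemma img_Fp_closure_U_q q f : prime q -> img Qp absp (MFp q) f ->
  closure_in (Amin Qp absp) (U_q Qp absp q) f.
Proof.
move=> Hq Hf; split; first exact: Amin_img Hf.
case: Hf => s -> Ps eps He; have HK := HQp q Hq.
set x : Qp q := (((val s)%:Z)%:~R)%ring.
suff [A HA] : exists A, forall P, In P Ps -> forall w, A < w ->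
    Rabs (mu_Qp (absp q) w x P - mu_Fp s P) < eps.
  exists (mu_Qp (absp q) (Rabs A + 1) x); split.
    by exists (Rabs A + 1), x; split => //; have := Rabs_pos A; lra.
  by move=> P HP; apply: HA => //; have := Rle_abs A; lra.
apply: exists_common_threshold => [P A A' HP HA' w Hw | P _]; first by apply: HP; lra.
rewrite /mu_Fp /rzero (ev_Fp_eq0 Hq) /mu_Qp /x ev_int.
case E: (q %| _)%nat; last first.
  by exists 0 => w _; rewrite (Qp_abs_int_ndvd HK (negbT E)) rpow1 Rminus_diag Rabs_R0.
have [_ Hlt] := Rinv_range (INR_prime_gt1 Hq).
have Hle := Qp_abs_int_dvd HK Hq E.
have Hx01 := conj (abs_ge0 (Qp_absolute_value HK) (P.[(val s)%:Z]%:~R)%ring) (Rle_lt_trans _ _ _ Hle Hlt).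
have [A HA] := rpow_cvg0_exponent_oo Hx01 He.
by exists A => w Hw; rewrite Rminus_0_r Rabs_pos_eq; [apply: HA | apply: rpow_ge0].
Qed.

Definition homog_bound (s : rat) (Ps : list {poly int}) : nat :=
  foldr (fun P m => maxn (absz (homog P (numq s) (denq s))) m) (absz (denq s)) Ps.

Lemma homog_bound_den s Ps : (absz (denq s) <= homog_bound s Ps)%nat.
Proof. by elim: Ps => [|P Ps IH] //=; rewrite leq_max IH orbT. Qed.

Lemma homog_bound_homog s Ps P : In P Ps ->
  (absz (homog P (numq s) (denq s)) <= homog_bound s Ps)%nat.
Proof.
elim: Ps => [|P0 Ps IH] //= [<-|HP]; first by rewrite leq_max leqnn.
by rewrite leq_max IH ?orbT.
Qed.

(* Clearing denominators, [P(s)] vanishes iff the integer [homog P] does; a prime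
   above it and above the denominator of [s] sees both as units. *)
Lemma mu_Qp1_ratr p s P : prime p -> (absz (denq s) < p)%nat ->
  (absz (homog P (numq s) (denq s)) < p)%nat -> mu_Qp (absp p) 1 (ratr s) P = mu_Q0 s P.
Proof.
move=> Hp Hden Hhom; have HK := HQp p Hp; have HA := Qp_absolute_value HK.
rewrite (mu_Q0E (Qp_int_inj HK Hp)) /mu_Qp.
case: eqP => [->|Hnz]; first by rewrite (abs0 HA) rpow0.
have Hh0 : homog P (numq s) (denq s) != 0%ring.
  by apply: contra_notN Hnz => /eqP Hh; apply/eqP; rewrite ev_ratr_eq0 ?Hh //; apply: Qp_int_inj HK Hp.
have Hd : ((denq s)%:~R : Qp p)%ring != 0%ring.
  by apply/eqP => /(Qp_int_inj HK Hp) /eqP; rewrite denq_eq0.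
have Ed : absp p ((denq s)%:~R)%ring = 1.
  by apply: (Qp_abs_int_ndvd HK); rewrite gtnNdvd // absz_gt0 denq_eq0.
have Eh : absp p ((homog P (numq s) (denq s))%:~R)%ring = 1.
  by apply: (Qp_abs_int_ndvd HK); rewrite gtnNdvd // absz_gt0.
have := f_equal (absp p) (@ev_frac_homog (Qp p) P (numq s) _ Hd).
rewrite (absM HA) (absX HA) Ed Eh pow1 Rmult_1_l => ->.
exact: rpow1.
Qed.

Lemma img_Q0_closure_primes f : img Qp absp MQ0 f ->
  closure_in (Amin Qp absp) (fun g => exists p, prime p /\ img Qp absp (MQp p 1) g) f.
Proof.
move=> Hf; split; first exact: Amin_img Hf.
case: Hf => s -> Ps eps He; case: (prime_above (homog_bound s Ps)) => p Hlt Hp.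
exists (mu_Qp (absp p) 1 (ratr s)); split; first by exists p; split => //; exists (ratr s).
move=> P HP; rewrite mu_Qp1_ratr ?Rminus_diag ?Rabs_R0 //; apply: leq_ltn_trans Hlt.
- exact: homog_bound_den.
- exact: homog_bound_homog.
Qed.

Lemma closure_U_primes f :
  closure_in (Amin Qp absp) (fun g => exists p, prime p /\ U_q Qp absp p g) f <->
  img Qp absp MQ0 f \/ (exists p, prime p /\ img Qp absp (MFp p) f) \/
  (exists p, prime p /\ U_q Qp absp p f).
Proof.
split=> [Hcl|[Hf|[[p [Hp Hf]]|[p [Hp Hf]]]]].
- have [[[|p|v|p w] [HF Hi]] _] := Hcl.
  + by left.
  + by right; left; exists p.
  + exfalso; have Hle2 : f (nconst 2) <= 1.
      apply: (closure_in_le Hcl) => g [p [Hp Hg]].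
      by have [_ Hle _] := U_q_nconst Hp Hg.
    by rewrite (img_R_nconst Hi) in Hle2; have := @rpow_INR_gt1 _ 2 (proj1 HF) isT; lra.
  + by right; right; exists p; case: HF => Hp Hw; split => //; apply: U_q_img Hi.
- apply: (closure_in_subset _ (img_Q0_closure_U_q (isT : prime 2) Hf)).
  by move=> g Hg; exists 2%nat.
- apply: (closure_in_subset _ (img_Fp_closure_U_q Hp Hf)).
  by move=> g Hg; exists p.
- by apply: closure_in_refl; [apply: Amin_U_q Hp Hf | exists p].
Qed.

End MinimalFields.

(* [t] is determined by [|t|] and [|t - 1|]: [2 t = |t|^2 - |t - 1|^2 + 1]. *)
Lemma Rabs_sub1_near t t' e : 0 < e <= 1 -> Rabs (Rabs t' - Rabs t) < e ->
  Rabs (Rabs (t' - 1) - Rabs (t - 1)) < e -> Rabs (t' - t) < e * (Rabs t + Rabs (t - 1) + 1).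
Proof.
move=> He /Rabs_def2 H1 /Rabs_def2 H2.
have Esq x : Rabs x * Rabs x = x * x by rewrite -Rabs_mult Rabs_pos_eq //; nra.
have E : t' - t = ((Rabs t' - Rabs t) * (Rabs t' + Rabs t)
    - (Rabs (t' - 1) - Rabs (t - 1)) * (Rabs (t' - 1) + Rabs (t - 1))) / 2.
  have -> : (Rabs t' - Rabs t) * (Rabs t' + Rabs t) = t' * t' - t * t.
    by rewrite -(Esq t') -(Esq t); ring.
  have -> : (Rabs (t' - 1) - Rabs (t - 1)) * (Rabs (t' - 1) + Rabs (t - 1))
    = (t' - 1) * (t' - 1) - (t - 1) * (t - 1).
    by rewrite -(Esq (t' - 1)) -(Esq (t - 1)); ring.
  by field.
rewrite E; have := Rabs_pos t; have := Rabs_pos (t - 1).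
have := Rabs_pos t'; have := Rabs_pos (t' - 1).
by move=> *; apply: Rabs_def1; nra.
Qed.

Lemma mu_R_nbhd_dist a : 0 < fst a <= 1 -> forall eps, 0 < eps ->
  exists Ps del, 0 < del /\ forall b, 0 < fst b <= 1 ->
    nbhd (mu_R (fst a) (snd a)) Ps del (mu_R (fst b) (snd b)) -> dRR a b < eps.
Proof.
case: a => v t /= [Hv _] eps He.
set C := Rabs t + Rabs (t - 1) + 1.
have HC : 0 < C by rewrite /C; have := Rabs_pos t; have := Rabs_pos (t - 1); lra.
set e := Rmin 1 (eps / C).
have He1 : 0 < e by apply: Rmin_pos; [lra | apply: Rdiv_lt_0_compat].
have HeC : e * C <= eps.
  have -> : eps = eps / C * C by field; lra.
  by apply: Rmult_le_compat_r; [lra | apply: Rmin_r].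
have [dX [HdX HX]] := rpow_base_near (Rabs_pos t) Hv He1.
have [d1 [Hd1 H1]] := rpow_base_near (Rabs_pos (t - 1)) Hv He1.
have Heta : 0 < Rmin eps (Rmin dX d1) by repeat apply: Rmin_pos.
have H2gt1 := INR_prime_gt1 (isT : prime 2).
have [d2 [Hd2 H2]] := @rpow_exponent_near (INR 2) v _ ltac:(lra) ltac:(lra) Heta.
exists [:: nconst 2; 'X%ring; ('X - 1)%ring], (Rmin d2 (Rmin dX d1)).
split => [|[v' t'] /= [Hv' _] Hn]; first by repeat apply: Rmin_pos.
have /Rmin_Rgt [N2 _] := Hn (nconst 2) ltac:(simpl; auto).
have /Rmin_Rgt [_ /Rmin_Rgt [NX _]] := Hn 'X%ring ltac:(simpl; auto).
have /Rmin_Rgt [_ /Rmin_Rgt [_ N1]] := Hn ('X - 1)%ring ltac:(simpl; auto).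
rewrite !mu_R_nconst in N2; rewrite !mu_R_abs /mu_Qp !evX in NX.
rewrite !mu_R_abs /mu_Qp !ev_Xsub1 in N1.
have /Rmin_Rgt [Hve /Rmin_Rgt [HvX Hv1]] := H2 v' N2.
have Ht := HX (Rabs t') v' (Rabs_pos t') HvX NX.
have Ht1 := H1 (Rabs (t' - 1)) v' (Rabs_pos (t' - 1)) Hv1 N1.
have Htt : Rabs (t' - t) < e * C := Rabs_sub1_near (conj He1 (Rmin_l _ _)) Ht Ht1.
by rewrite /dRR /=; apply: Rmax_lub_lt; rewrite Rabs_minus_sym; lra.
Qed.

Lemma homeo_R : homeo_onto (fun a : R * R => 0 < fst a <= 1) dRR
  (fun a => mu_R (fst a) (snd a)) U_R.
Proof.
apply: homeo_onto_intro.
- move=> a b; exact (dRK_ge0 Rabs a b).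
- move=> a b; exact (dRK_eq0 Rabs_absolute_value (a:=a) (b:=b)).
- by move=> f; split => [[v [t [Hv ->]]]|[[v t] [Hv ->]]]; [exists (v, t) | exists v, t].
- move=> a [Ha _] Ps eps He.
  have [del [Hd H]] := mu_abs_nbhd Rabs_absolute_value Ha Ps He.
  by exists del; split => // b [Hb _]; rewrite !mu_R_abs; apply: H.
- exact: mu_R_nbhd_dist.
Qed.

Section PAdicHomeo.
Variables (q : nat) (K : fieldType) (abs : K -> R).
Hypotheses (HK : is_Qp q K abs) (Hq : prime q).

Let HA := Qp_absolute_value HK.

(* [s] is located through a rational approximation [r = a / b]: the polynomial
   [b X - a] takes the value [b (s - r)] at [s]. *)
Lemma mu_Qp_nbhd_dist a : 0 < fst a -> forall eps, 0 < eps ->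
  exists Ps del, 0 < del /\ forall b, 0 < fst b ->
    nbhd (mu_Qp abs (fst a) (snd a)) Ps del (mu_Qp abs (fst b) (snd b)) -> dRK abs a b < eps.
Proof.
case: a => w s /= Hw eps He.
have [a0 [b0 [Hb0 Hr]]] := Qp_dense HK s (ltac:(lra) : 0 < eps / 2).
set r : K := (a0%:~R / b0%:R)%ring.
set Pr : {poly int} := ((Posz b0)%:P * 'X - a0%:P)%ring.
have HB : 0 < abs (b0%:R)%ring := Qp_abs_nat_gt0 HK Hq Hb0.
have Hb0K : (b0%:R : K)%ring != 0%ring by apply/eqP => E; rewrite E (abs0 HA) in HB; lra.
have Key x : abs (ev Pr x) = abs (b0%:R)%ring * abs (x - r)%ring.
  by rewrite /Pr ev_linear -(absM HA) mulrBr /r mulrCA divff ?mulr1.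
have He3 : 0 < abs (b0%:R)%ring * (eps / 2) by apply: Rmult_lt_0_compat; lra.
have [d [Hd Hroot]] := rpow_base_near (abs_ge0 HA (ev Pr s)) Hw He3.
have Hq1 := Rinv_range (INR_prime_gt1 Hq).
have Heta : 0 < Rmin eps d by apply: Rmin_pos.
have [d1 [Hd1 Hexp]] := @rpow_exponent_near (/ INR q) w _ ltac:(lra) ltac:(lra) Heta.
exists [:: nconst q; Pr], (Rmin d1 d); split => [|[w' s'] /= Hw' Hn].
  exact: Rmin_pos.
have /Rmin_Rgt [Nq _] := Hn (nconst q) ltac:(simpl; auto).
have /Rmin_Rgt [_ Nr] := Hn Pr ltac:(simpl; auto).
rewrite !mu_Qp_nconst (Qp_abs_p HK) in Nq.
have /Rmin_Rgt [Hwe Hwd] := Hexp w' Nq.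
have /Rabs_def2 := Hroot _ w' (abs_ge0 HA _) Hwd Nr.
rewrite !Key => [[Habs _]].
have Hsr : abs (s' - r)%ring < eps.
  apply: (Rmult_lt_reg_l (abs (b0%:R)%ring)) => //.
  have Hbsr : abs (b0%:R)%ring * abs (s - r)%ring < abs (b0%:R)%ring * (eps / 2).
    exact: Rmult_lt_compat_l.
  move: Habs Hbsr; move: (abs (b0%:R)%ring) (abs (s - r)%ring) (abs (s' - r)%ring).
  by move=> B X Y H1 H2; lra.
have Hss : abs (s - s')%ring < eps.
  rewrite -[(s - s')%ring](subrKA r) addrC.
  apply: Rle_lt_trans (Qp_ultra HK _ _) _; rewrite (absB HA r).
  by apply: Rmax_lub_lt => //; apply: Rlt_trans Hr _; lra.
rewrite /dRK /rsub /=; apply: Rmax_lub_lt => //.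
by rewrite Rabs_minus_sym.
Qed.

Lemma homeo_Qp : homeo_onto (fun a : R * K => 0 < fst a) (dRK abs)
  (fun a => mu_Qp abs (fst a) (snd a)) (fun f => exists w s, 0 < w /\ f = mu_Qp abs w s).
Proof.
apply: homeo_onto_intro.
- exact: dRK_ge0.
- exact: dRK_eq0 HA.
- by move=> f; split => [[w [s [Hw ->]]]|[[w s] [Hw ->]]]; [exists (w, s) | exists w, s].
- exact: mu_abs_nbhd HA.
- exact: mu_Qp_nbhd_dist.
Qed.

End PAdicHomeo.

Theorem lemma3p5 (Qp : nat -> fieldType) (absp : forall p, Qp p -> R)
  (HQp : forall p, prime p -> is_Qp p (Qp p) (absp p)) :
  (* (a) *)
  closed_in (Amin Qp absp) (img Qp absp MQ0) /\
  (* (b) *)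
  (forall F G, valid F -> valid G -> F <> G ->
     forall f, ~ (img Qp absp F f /\ img Qp absp G f)) /\
  (* (c) *)
  (homeo_onto (fun a : R * R => 0 < fst a <= 1) dRR
     (fun a => mu_R (fst a) (snd a)) U_R /\
   open_in (Amin Qp absp) U_R /\
   (forall f, closure_in (Amin Qp absp) U_R f <->
              U_R f \/ img Qp absp MQ0 f)) /\
  (* (d) *)
  (forall q, prime q ->
     open_in (Amin Qp absp) (U_q Qp absp q) /\
     homeo_onto (fun a : R * Qp q => 0 < fst a) (@dRK (Qp q) (absp q))
       (fun a => mu_Qp (absp q) (fst a) (snd a)) (U_q Qp absp q)) /\
  (* (e) *)
  (forall q, prime q -> forall f, img Qp absp (MFp q) f ->
     closure_in (Amin Qp absp) (U_q Qp absp q) f) /\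
  (* (f) *)
  (forall f, img Qp absp MQ0 f ->
     closure_in (Amin Qp absp)
       (fun g => exists p, prime p /\ img Qp absp (MQp p 1) g) f) /\
  (* (g) *)
  (forall f, closure_in (Amin Qp absp)
                (fun g => exists p, prime p /\ U_q Qp absp p g) f <->
     img Qp absp MQ0 f \/ (exists p, prime p /\ img Qp absp (MFp p) f) \/
     (exists p, prime p /\ U_q Qp absp p f)) /\
  (* (h) *)
  (forall q, prime q -> forall f, img Qp absp MQ0 f ->
     closure_in (Amin Qp absp) (U_q Qp absp q) f).
Proof.
split; first exact: closed_img_Q0.
split; first by move=> F G HF HG Hne f [HiF HiG]; apply/Hne/(img_inj HQp HF HG HiF HiG).
split.
  split; first exact: homeo_R.
  split; first exact: open_U_R.
  move=> f; split; first exact: closure_U_R.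
  case=> [Hf|]; last exact: img_Q0_closure_U_R.
  exact: closure_in_refl (Amin_U_R absp Hf) Hf.
split; first by move=> q Hq; split; [apply: open_U_q | apply: homeo_Qp (HQp q Hq) Hq].
split; first by move=> q Hq f; apply: img_Fp_closure_U_q.
split; first exact: img_Q0_closure_primes.
split; first exact: closure_U_primes.
by move=> q Hq f; apply: img_Q0_closure_U_q.
Qed.
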